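(* Let $R$ be a reflexive relation on $U$. The set of completely join-irreducible elements of $\mathrm{DM(RS)}$ is $\{(\{x\}^{\vartriangle\blacktriangledown},\{x\}^{\vartriangle\blacktriangle})\mid \{x\}^{\vartriangle}\text{ is completely join-irreducible in }\wp(U)^{\vartriangle}\}\ \cup\ \{(\{x\}^{\blacktriangledown},\{x\}^{\blacktriangle})\mid \{x\}^{\blacktriangle}\text{ is completely join-irreducible in }\wp(U)^{\blacktriangle}\text{ and }x\notin\mathcal S\}.$
   Context: Let $U$ be a set and $R\subseteq U\times U$ a binary relation. For $x\in U$, $R(x)=\{y\in U\mid (x,y)\in R\}$ and $\breve R(x)=\{y\in U\mid (y,x)\in R\}$. For $X\subseteq U$: $X^{\blacktriangledown}=\{x\in U\mid R(x)\subseteq X\}$, $X^{\blacktriangle}=\{x\in U\mid R(x)\cap X\neq\emptyset\}$, $X^{\triangledown}=\{x\in U\mid \breve R(x)\subseteq X\}$, $X^{\vartriangle}=\{x\in U\mid \breve R(x)\cap X\neq\emptyset\}$; thus $\{x\}^{\vartriangle}=R(x)$ and $\{x\}^{\blacktriangle}=\breve R(x)$, and composites such as $X^{\vartriangle\blacktriangledown}$ mean $(X^{\vartriangle})^{\blacktriangledown}$. $\wp(U)^{\blacktriangledown}=\{X^{\blacktriangledown}\mid X\subseteq U\}$ and similarly $\wp(U)^{\blacktriangle},\wp(U)^{\vartriangle}$, complete lattices under $\subseteq$ (joins in $\wp(U)^{\blacktriangle},\wp(U)^{\vartriangle}$ are unions). $\mathcal S=\{x\in U\mid |R(x)|=1\}$.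 $\mathrm{RS}=\{(X^{\blacktriangledown},X^{\blacktriangle})\mid X\subseteq U\}$ ordered coordinatewise; $\mathrm{DM(RS)}$ is its Dedekind–MacNeille completion, identified with $\{(A,B)\in\wp(U)^{\blacktriangledown}\times\wp(U)^{\blacktriangle}\mid A^{\vartriangle\blacktriangle}\subseteq B,\ A\cap\mathcal S=B\cap\mathcal S\}$ ordered coordinatewise, with meets $\bigwedge_i(X_i,Y_i)=(\bigcap_iX_i,(\bigcap_iY_i)^{\triangledown\blacktriangle})$ and joins $\bigvee_i(X_i,Y_i)=((\bigcup_iX_i)^{\vartriangle\blacktriangledown},\bigcup_iY_i)$. An element $j$ of a complete lattice $L$ is completely join-irreducible if $j=\bigvee S$ implies $j\in S$ for every $S\subseteq L$. *)

From mathcomp Require Import all_boot.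
From mathcomp Require Import boolp classical_sets.
Set Implicit Arguments. Unset Strict Implicit. Unset Printing Implicit Defensive.
Local Open Scope classical_set_scope.

Section RoughSets.
Variables (U : Type) (R : U -> U -> Prop).

(* R(x) = R x ; breve R(x) *)
Definition Rinv (x : U) : set U := [set y | R y x].

(* X^{black down} *)
Definition boxb (X : set U) : set U := [set x | R x `<=` X].
(* X^{black up} *)
Definition diab (X : set U) : set U := [set x | R x `&` X !=set0].
(* X^{white down} *)
Definition boxw (X : set U) : set U := [set x | Rinv x `<=` X].
(* X^{white up} *)
Definition diaw (X : set U) : set U := [set x | Rinv x `&` X !=set0].

Definition Ssing : set U := [set x | exists y, R x = [set y]].

(* DM(RS), as the set of pairs (A,B) described in the paper *)
Definition DMRS : set (set U * set U) :=
  [set p | (exists X, p.1 = boxb X) /\ (exists Y, p.2 = diab Y) /\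
           diab (diaw p.1) `<=` p.2 /\ p.1 `&` Ssing = p.2 `&` Ssing].

End RoughSets.

Definition pair_le (U : Type) (p q : set U * set U) : Prop :=
  p.1 `<=` q.1 /\ p.2 `<=` q.2.

Definition is_lub_in (T : Type) (L : set T) (le : T -> T -> Prop) (F : set T) (j : T) :=
  L j /\ (forall y, F y -> le y j) /\
  (forall z, L z -> (forall y, F y -> le y z) -> le j z).

Definition cji (T : Type) (L : set T) (le : T -> T -> Prop) (j : T) : Prop :=
  L j /\ forall F : set T, F `<=` L -> is_lub_in L le F j -> F j.

From mathcomp Require Import all_boot.
From mathcomp Require Import boolp classical_sets.
Set Implicit Arguments. Unset Strict Implicit. Unset Printing Implicit Defensive.
Local Open Scope classical_set_scope.

(* Joins in DM(RS) are (boxb (diaw (\bigcup A_i)), \bigcup B_i), and every (A, diab Y)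
   in DM(RS) is the join of the generators rs (diaw [set x]) for x in A and rs [set y] for y
   in Y outside Ssing; the points of Y in Ssing are absorbed by the first kind because
   A `&` Ssing = B `&` Ssing.  Hence a completely join-irreducible element is a generator.
   Conversely, rs (diaw [set x]) is the join of a family exactly when diaw [set x] is the
   union of the diaw-images of its first components, and rs [set y] (whose first component
   is empty when y is not in Ssing) exactly when diab [set y] is the union of its second
   components; so complete join-irreducibility transfers both ways to range diaw and
   range diab, where joins are unions. *)

Lemma is_lub_in_unique (T : Type) (L : set T) (le : T -> T -> Prop) (F : set T) (a b : T) :
  (forall x y, le x y -> le y x -> x = y) ->
  is_lub_in L le F a -> is_lub_in L le F b -> a = b.
Proof.
by move=> le_anti [La [ubFa lea]] [Lb [ubFb leb]]; apply: le_anti; [apply: lea | apply: leb].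
Qed.

Lemma is_lub_in_bigcup (T : Type) (L : set (set T)) (F : set (set T)) :
  L (\bigcup_(W in F) W) -> is_lub_in L (@subset T) F (\bigcup_(W in F) W).
Proof. by move=> LF; split=> //; split=> [W|Z _]; [apply: bigcup_sup | apply: bigcup_sub]. Qed.

Lemma is_lub_in_bigcup_eq (T : Type) (L : set (set T)) (F : set (set T)) (A : set T) :
  L (\bigcup_(W in F) W) -> is_lub_in L (@subset T) F A -> A = \bigcup_(W in F) W.
Proof.
move=> LF lubA; apply: is_lub_in_unique lubA (is_lub_in_bigcup LF).
by move=> X Y XY YX; rewrite eqEsubset.
Qed.

Lemma pair_le_anti (U : Type) (p q : set U * set U) : pair_le p q -> pair_le q p -> p = q.
Proof.
by case: p q => [A B] [C D] [AC BD] [CA DB]; congr pair; rewrite eqEsubset.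
Qed.

Section Approximations.
Variables (U : Type) (R : U -> U -> Prop).

Lemma boxbS (X Y : set U) : X `<=` Y -> boxb R X `<=` boxb R Y.
Proof. by move=> XY x Rx w /Rx /XY. Qed.

Lemma diabS (X Y : set U) : X `<=` Y -> diab R X `<=` diab R Y.
Proof. by move=> XY x [w [Rxw Xw]]; exists w; split=> //; apply: XY. Qed.

Lemma diawS (X Y : set U) : X `<=` Y -> diaw R X `<=` diaw R Y.
Proof. by move=> XY x [w [Rwx Xw]]; exists w; split=> //; apply: XY. Qed.

Lemma diaw0 : diaw R set0 = set0.
Proof. by rewrite -subset0 => z [w [_ []]]. Qed.

Lemma sub_boxb_diaw (X : set U) : X `<=` boxb R (diaw R X).
Proof. by move=> x Xx w Rxw; exists x. Qed.

Lemma diaw_boxb_sub (X : set U) : diaw R (boxb R X) `<=` X.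
Proof. by move=> w [v [Rvw Rv]]; apply: Rv. Qed.

Lemma boxb_diaw_boxb (X : set U) : boxb R (diaw R (boxb R X)) = boxb R X.
Proof.
by rewrite eqEsubset; split; [apply: boxbS; apply: diaw_boxb_sub | apply: sub_boxb_diaw].
Qed.

Lemma diaw_boxb_diaw (X : set U) : diaw R (boxb R (diaw R X)) = diaw R X.
Proof.
by rewrite eqEsubset; split; [apply: diaw_boxb_sub | apply: diawS; apply: sub_boxb_diaw].
Qed.

Lemma diab_bigcup (I : Type) (P : set I) (X : I -> set U) :
  diab R (\bigcup_(i in P) X i) = \bigcup_(i in P) diab R (X i).
Proof.
rewrite eqEsubset; split=> x.
  by move=> [w [Rxw [i Pi Xiw]]]; exists i => //; exists w.
by move=> [i Pi [w [Rxw Xiw]]]; exists w; split=> //; exists i.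
Qed.

Lemma diaw_bigcup (I : Type) (P : set I) (X : I -> set U) :
  diaw R (\bigcup_(i in P) X i) = \bigcup_(i in P) diaw R (X i).
Proof.
rewrite eqEsubset; split=> x.
  by move=> [w [Rwx [i Pi Xiw]]]; exists i => //; exists w.
by move=> [i Pi [w [Rwx Xiw]]]; exists w; split=> //; exists i.
Qed.

Lemma bigcup_range_diab (I : Type) (P : set I) (X : I -> set U) :
  (forall i, P i -> range (diab R) (X i)) -> range (diab R) (\bigcup_(i in P) X i).
Proof.
move=> Xdiab; exists (\bigcup_(Y in [set Y | exists2 i, P i & diab R Y = X i]) Y) => //.
rewrite diab_bigcup eqEsubset; split=> x.
  by move=> [Y [i Pi eY] Yx]; exists i => //; rewrite -eY.
by move=> [i Pi Xix]; have [Y _ eY] := Xdiab i Pi; exists Y; [exists i | rewrite eY].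
Qed.

Lemma bigcup_range_diaw (I : Type) (P : set I) (X : I -> set U) :
  (forall i, P i -> range (diaw R) (X i)) -> range (diaw R) (\bigcup_(i in P) X i).
Proof.
move=> Xdiaw; exists (\bigcup_(Y in [set Y | exists2 i, P i & diaw R Y = X i]) Y) => //.
rewrite diaw_bigcup eqEsubset; split=> x.
  by move=> [Y [i Pi eY] Yx]; exists i => //; rewrite -eY.
by move=> [i Pi Xix]; have [Y _ eY] := Xdiaw i Pi; exists Y; [exists i | rewrite eY].
Qed.

Lemma range_diaw_boxbK (W : set U) : range (diaw R) W -> diaw R (boxb R W) = W.
Proof. by move=> [X _ <-]; rewrite diaw_boxb_diaw. Qed.

Definition rs (X : set U) : set U * set U := (boxb R X, diab R X).

Definition DMjoin (F : set (set U * set U)) : set U * set U :=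
  (boxb R (diaw R (\bigcup_(q in F) q.1)), \bigcup_(q in F) q.2).

End Approximations.

Section ReflexiveRelation.
Variables (U : Type) (R : U -> U -> Prop).
Hypothesis Rrefl : forall x, R x x.

Lemma Ssing_eq1 x : Ssing R x -> R x = [set x].
Proof. by move=> [y Rxy]; have := Rrefl x; rewrite Rxy => ->. Qed.

Lemma boxb_Ssing (X : set U) z : Ssing R z -> boxb R X z <-> X z.
Proof. by move=> /Ssing_eq1 Rz; rewrite /boxb /= Rz; split=> [/(_ z erefl) | Xz _ ->]. Qed.

Lemma diab_Ssing (X : set U) z : Ssing R z -> diab R X z <-> X z.
Proof. by move=> /Ssing_eq1 Rz; rewrite /diab /= Rz; split=> [[_ [-> Xz]] | Xz] //; exists z. Qed.

Lemma boxb0 : boxb R set0 = set0.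
Proof. by rewrite -subset0 => z; apply; apply: Rrefl. Qed.

Lemma boxb_set1_nonsing x : ~ Ssing R x -> boxb R [set x] = set0.
Proof.
move=> nSx; rewrite -subset0 => z Rz; apply: nSx.
have zx : z = x by apply: Rz; apply: Rrefl.
subst x; exists z; rewrite eqEsubset; split=> // _ ->; apply: Rrefl.
Qed.

Lemma diab_set1I_Ssing x : ~ Ssing R x -> diab R [set x] `&` Ssing R = set0.
Proof.
move=> nSx; rewrite -subset0 => z [[w [Rzw wx]] Sz]; apply: nSx.
by move: Rzw; rewrite (Ssing_eq1 Sz) wx => ->.
Qed.

Lemma DMRS_rs X : DMRS R (rs R X).
Proof.
split; first by exists X. split; first by exists X.
split; first by apply: diabS; apply: diaw_boxb_sub.
rewrite eqEsubset; split=> z [Xz Sz]; split=> //=.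
  by apply/(diab_Ssing _ Sz); apply/(boxb_Ssing _ Sz).
by apply/(boxb_Ssing _ Sz); apply/(diab_Ssing _ Sz).
Qed.

Lemma DMRS_set0 W : range (diab R) W -> W `&` Ssing R = set0 -> DMRS R (set0, W).
Proof.
move=> [Y _ eY] WS; split; first by exists set0; rewrite boxb0.
split; first by exists Y.
split; first by move=> z [w [_ [v [_ []]]]].
by rewrite WS set0I.
Qed.

Lemma DMRS_boxb_diaw p : DMRS R p -> boxb R (diaw R p.1) = p.1.
Proof. by move=> [[X ->] _]; rewrite boxb_diaw_boxb. Qed.

Lemma DMRS_DMjoin F : F `<=` DMRS R -> DMRS R (DMjoin R F).
Proof.
move=> FDM; split; first by eexists.
split.
  have [Y _ eY] : range (diab R) (\bigcup_(q in F) q.2).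
    by apply: bigcup_range_diab => q /FDM [_ [[Y ->] _]]; exists Y.
  by exists Y.
split.
  rewrite /= diaw_boxb_diaw diaw_bigcup diab_bigcup.
  by apply: subset_bigcup => q /FDM [_ [_ [subq _]]].
rewrite eqEsubset; split=> z [Jz Sz]; split=> //=.
  have [v [Rvz [q Fq qv]]] := Jz z (Rrefl z).
  exists q => //; apply: (FDM q Fq).2.2.1.
  by exists z; split; [apply: Rrefl | exists v].
move: Jz => [q Fq qz]; have [_ [_ [_ eqS]]] := FDM q Fq.
have [q1z _] : (q.1 `&` Ssing R) z by rewrite eqS.
by apply: sub_boxb_diaw; exists q.
Qed.

Lemma DMjoin_lub F : F `<=` DMRS R -> is_lub_in (DMRS R) (@pair_le U) F (DMjoin R F).
Proof.
move=> FDM; split; first exact: DMRS_DMjoin.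
split=> [q Fq | p pDM ubp]; split.
- by move=> z q1z; apply: sub_boxb_diaw; exists q.
- by move=> z q2z; exists q.
- rewrite -(DMRS_boxb_diaw pDM); apply: boxbS; apply: diawS.
  by apply: bigcup_sub => q /ubp [].
- by apply: bigcup_sub => q /ubp [].
Qed.

Lemma DMjoin_eq F p : F `<=` DMRS R -> is_lub_in (DMRS R) (@pair_le U) F p -> p = DMjoin R F.
Proof. move=> FDM lubp; exact: is_lub_in_unique (@pair_le_anti U) lubp (DMjoin_lub FDM). Qed.

Lemma DMRS_lub_atoms p : DMRS R p ->
  exists2 F, F `<=` DMRS R /\ is_lub_in (DMRS R) (@pair_le U) F p &
    F `<=` [set q | (exists x, q = rs R (diaw R [set x]))
                  \/ (exists2 x, ~ Ssing R x & q = rs R [set x])].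
Proof.
move=> pDM; have eA := DMRS_boxb_diaw pDM.
case: p pDM eA => A B /[dup] pDM [_ [[Y /= eB] [/= subB eqS]]] /= eA.
pose F := [set q | (exists2 x, A x & q = rs R (diaw R [set x]))
                \/ (exists2 y, Y y /\ ~ Ssing R y & q = rs R [set y])].
exists F; last by move=> q [[x _ ->] | [y [_ nSy] ->]]; [left; exists x | right; exists y].
split; first by move=> q [[x _ ->] | [y _ ->]]; apply: DMRS_rs.
split=> //; split=> [q [[x Ax ->] | [y [Yy nSy] ->]] | [C D] _ ub]; first split.
- by rewrite -eA; apply: boxbS; apply: diawS => _ ->.
- by apply: subset_trans subB; apply: diabS; apply: diawS => _ ->.
- by rewrite /rs boxb_set1_nonsing //; split=> //; rewrite eB; apply: diabS => _ ->.
split=> z /=.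
  by move=> Az; apply: (ub _ (or_introl (ex_intro2 _ _ z Az erefl))).1; apply: sub_boxb_diaw.
rewrite eB => -[y [Rzy Yy]].
have [Sy | nSy] := pselect (Ssing R y).
  (* [y] is in [B] by reflexivity, hence in [A] by the [Ssing] condition. *)
  have [Ay _] : (A `&` Ssing R) y by rewrite eqS eB; split=> //; exists y; split.
  apply: (ub _ (or_introl (ex_intro2 _ _ y Ay erefl))).2.
  by exists y; split=> //; exists y; split.
by apply: (ub _ (or_intror (ex_intro2 _ _ y (conj Yy nSy) erefl))).2; exists y.
Qed.

Lemma cji_rs_diaw x :
  cji (DMRS R) (@pair_le U) (rs R (diaw R [set x]))
  <-> cji (range (diaw R)) (@subset U) (diaw R [set x]).
Proof.
split=> [[_ cjiJ] | [_ cjiW]].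
  split=> [|F F_diaw lubF]; first by exists [set x].
  have ex : diaw R [set x] = \bigcup_(W in F) W.
    exact: is_lub_in_bigcup_eq (bigcup_range_diaw F_diaw) lubF.
  have GDM : rs R @` F `<=` DMRS R by move=> _ [W _ <-]; apply: DMRS_rs.
  have : (rs R @` F) (rs R (diaw R [set x])).
    apply: cjiJ => //; suff -> : rs R (diaw R [set x]) = DMjoin R (rs R @` F).
      exact: DMjoin_lub.
    rewrite /DMjoin !bigcup_image /= -diab_bigcup -ex diaw_bigcup.
    by rewrite (eq_bigcupr (fun W FW => range_diaw_boxbK (F_diaw W FW))) -ex.
  move=> [W FW /(congr1 fst) /= eW].
  by rewrite -diaw_boxb_diaw -eW range_diaw_boxbK //; apply: F_diaw.
split=> [|F FDM lubF]; first exact: DMRS_rs.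
have /(congr1 fst) /= eJ := DMjoin_eq FDM lubF.
have ex : diaw R [set x] = \bigcup_(W in (fun q => diaw R q.1) @` F) W.
  by rewrite bigcup_image -diaw_bigcup -diaw_boxb_diaw eJ diaw_boxb_diaw.
have : ((fun q => diaw R q.1) @` F) (diaw R [set x]).
  apply: cjiW; first by move=> _ [q _ <-]; exists q.1.
  by rewrite ex; apply: is_lub_in_bigcup; rewrite -ex; exists [set x].
move=> [[A B] Fq /= eAx]; have [_ le2] := lubF.2.1 _ Fq.
have qDM := FDM _ Fq; have [_ [_ [/= subB _]]] := qDM.
suff -> : rs R (diaw R [set x]) = (A, B) by [].
congr pair; first by rewrite -eAx (DMRS_boxb_diaw qDM).
by rewrite eqEsubset; split=> //; rewrite -eAx.
Qed.

Lemma cji_rs_set1 x : ~ Ssing R x ->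
  cji (DMRS R) (@pair_le U) (rs R [set x])
  <-> cji (range (diab R)) (@subset U) (diab R [set x]).
Proof.
move=> nSx; split=> [[_ cjiJ] | [_ cjiB]].
  split=> [|F F_diab lubF]; first by exists [set x].
  have ex : diab R [set x] = \bigcup_(W in F) W.
    exact: is_lub_in_bigcup_eq (bigcup_range_diab F_diab) lubF.
  pose G := (fun W => (set0 : set U, W)) @` F.
  have GDM : G `<=` DMRS R.
    move=> _ [W FW <-]; apply: DMRS_set0; first exact: F_diab.
    by rewrite -subset0 -(diab_set1I_Ssing nSx); apply: setSI; rewrite ex; apply: bigcup_sup.
  have : G (rs R [set x]).
    apply: cjiJ => //; suff -> : rs R [set x] = DMjoin R G by exact: DMjoin_lub.
    rewrite /DMjoin !bigcup_image /= bigcup0 // diaw0.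
    by rewrite /rs boxb_set1_nonsing // boxb0 -ex.
  by move=> [W FW /(congr1 snd) /= <-].
split=> [|F FDM lubF]; first exact: DMRS_rs.
have /(congr1 snd) /= eJ := DMjoin_eq FDM lubF.
have ex : diab R [set x] = \bigcup_(W in snd @` F) W by rewrite bigcup_image.
have : (snd @` F) (diab R [set x]).
  apply: cjiB; first by move=> _ [q /FDM [_ [[Y ->] _]] <-]; exists Y.
  by rewrite ex; apply: is_lub_in_bigcup; rewrite -ex; exists [set x].
move=> [[A B] Fq /= eB]; have [le1 _] := lubF.2.1 _ Fq.
suff -> : rs R [set x] = (A, B) by [].
congr pair; last by [].
by move: le1; rewrite /rs /= boxb_set1_nonsing // subset0 => ->.
Qed.

End ReflexiveRelation.

Theorem mainTheorem2 (U : Type) (R : U -> U -> Prop) (Rrefl : forall x, R x x) :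
  cji (DMRS R) (@pair_le U) =
  [set p | (exists x : U,
              cji (range (diaw R)) (@subset U) (diaw R [set x]) /\
              p = (boxb R (diaw R [set x]), diab R (diaw R [set x])))
        \/ (exists x : U,
              cji (range (diab R)) (@subset U) (diab R [set x]) /\
              ~ Ssing R x /\
              p = (boxb R [set x], diab R [set x]))].
Proof.
rewrite eqEsubset; split=> [p cjip | _ [[x [cjix ->]] | [x [cjix [nSx ->]]]]].
- have [F [FDM lubF] Fatoms] := DMRS_lub_atoms Rrefl cjip.1.
  have [[x ex] | [x nSx ex]] := Fatoms p (cjip.2 F FDM lubF); rewrite ex in cjip.
  + by left; exists x; split; first exact/(cji_rs_diaw Rrefl).
  + by right; exists x; split; first exact/(cji_rs_set1 Rrefl nSx).
- exact/(cji_rs_diaw Rrefl).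
- exact/(cji_rs_set1 Rrefl nSx).
Qed.
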